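(* Let $\mathcal H$ be a finite hypergraph with vertices $v_1,\dots,v_n$ and hyperedges $\lambda_1,\dots,\lambda_h$, let $L=L_K(\mathcal H)$ (a unital algebra with $1=\sum_kv_k$), and let $A,B$ be the $h\times n$ integer matrices with $A_{k\ell}=|\{i\in I_{\lambda_k}: s(\lambda_k)_i=v_\ell\}|$ and $B_{k\ell}=|\{j\in J_{\lambda_k}: r(\lambda_k)_j=v_\ell\}|$. Assume the confluence condition holds in the free commutative monoid $T$ on $\{v_1,\dots,v_n\}$. Then $L$ has Invariant Basis Number if and only if $\mathrm{rank}(B^t-A^t)<\mathrm{rank}([B^t-A^t\ \ c])$, where $c$ is the $n\times1$ column with all entries $1$ and ranks are over $\mathbb Q$.
   Context: $K$ is a field. A hypergraph $\mathcal H=(\mathcal H^0,\mathcal H^1,s,r)$: vertex set $\mathcal H^0$, hyperedge set $\mathcal H^1$, and for each hyperedge $\lambda$ nonempty index sets $I_\lambda,J_\lambda$ with families $s(\lambda)=(s(\lambda)_i)_{i\in I_\lambda}$, $r(\lambda)=(r(\lambda)_j)_{j\in J_\lambda}$ of vertices; finite means $\mathcal H^0$, $\mathcal H^1$ and all $I_\lambda,J_\lambda$ are finite. $L_K(\mathcal H)$ is the $K$-algebra generated by $\{v,\lambda_{ij},\lambda_{ij}^*\}$ subject to $uv=\delta_{u,v}u$; $s(\lambda)_i\lambda_{ij}=\lambda_{ij}=\lambda_{ij}r(\lambda)_j$, $r(\lambda)_j\lambda_{ij}^*=\lambda_{ij}^*=\lambda_{ij}^*s(\lambda)_i$; $\sum_{j\in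 J_\lambda}\lambda_{ij}\lambda_{kj}^*=\delta_{ik}s(\lambda)_i$; $\sum_{i\in I_\lambda}\lambda_{ij}^*\lambda_{ik}=\delta_{jk}r(\lambda)_j$. $\mathcal V(L)$ is the commutative monoid of Murray–von Neumann classes $[e]$ of idempotent matrices over $L$ with finitely many nonzero entries ($e\sim f$ iff $e=xy$, $f=yx$), with $[e]+[f]=[\mathrm{diag}(e,f)]$; for $x=\sum_\ell x_\ell v_\ell\in T$ write $[x]=\sum_\ell x_\ell[v_\ell]\in\mathcal V(L)$. A unital ring $L$ has Invariant Basis Number if $L^m\cong L^p$ as left modules implies $m=p$. For $k\in\{1,\dots,h\}$ let $a_k,b_k\in T$ be the $k$-th rows of $A$, $B$ (i.e. $a_k=\sum_{i\in I_{\lambda_k}}s(\lambda_k)_i$, $b_k=\sum_{j\in J_{\lambda_k}}r(\lambda_k)_j$). The partial operation $M_k$ on $T$ is defined on $x\in T$ with $x\ge a_k$ coordinatewise by $M_k(x)=x-a_k+b_k$. For a finite sequence $\sigma=(k_1,\dots,k_t)$ in $\{1,\dots,h\}$, $\Delta_\sigma(x)=M_{k_t}(\cdots M_{k_1}(x))$ when defined. The confluence condition holds in $T$ if for all $x,y\in T$: $[x]=[y]$ in $\mathcal V(L)$ if and only if there exist finite sequences $\sigma,\sigma'$ with $\Delta_\sigma(x)$ and $\Delta_{\sigma'}(y)$ defined and equal in $T$. *)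

From HB Require Import structures.
From mathcomp Require Import all_boot all_order all_algebra.
Set Implicit Arguments. Unset Strict Implicit. Unset Printing Implicit Defensive.
Import Order.TTheory GRing.Theory Num.Theory.
Local Open Scope ring_scope.

(* A finite hypergraph with vertices 'I_hv (v_1..v_n) and hyperedges 'I_he
   (lambda_1..lambda_h); hyperedge k has nonempty finite index sets
   I_k = 'I_(hI k), J_k = 'I_(hJ k), source family hs k and range family hr k. *)
Record hypergraph := Hypergraph {
  hv : nat;
  he : nat;
  hI : 'I_he -> nat;
  hJ : 'I_he -> nat;
  hI_gt0 : forall k, (0 < hI k)%N;
  hJ_gt0 : forall k, (0 < hJ k)%N;
  hs : forall k, 'I_(hI k) -> 'I_hv;
  hr : forall k, 'I_(hJ k) -> 'I_hv
}.
Arguments hI : clear implicits.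
Arguments hJ : clear implicits.
Arguments hs : clear implicits.
Arguments hr : clear implicits.

Section LPA.
Variables (K : fieldType) (H : hypergraph).

Definition lpa_relations (R : algType K) (v : 'I_(hv H) -> R)
  (lam : forall k, 'I_(hI H k) -> 'I_(hJ H k) -> R)
  (lams : forall k, 'I_(hI H k) -> 'I_(hJ H k) -> R) : Prop :=
  [/\ (forall u w, v u * v w = if u == w then v u else 0),
      (forall k i j, v (hs H k i) * lam k i j = lam k i j /\ lam k i j * v (hr H k j) = lam k i j),
      (forall k i j, v (hr H k j) * lams k i j = lams k i j /\ lams k i j * v (hs H k i) = lams k i j),
      (forall k (i i' : 'I_(hI H k)),
          \sum_(j < hJ H k) lam k i j * lams k i' j = if i == i' then v (hs H k i) else 0) &
      (forall k (j j' : 'I_(hJ H k)),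
          \sum_(i < hI H k) lams k i j * lam k i j' = if j == j' then v (hr H k j) else 0)].

(* (not necessarily unital) K-algebra homomorphisms *)
Definition alg_hom (R S : algType K) (f : R -> S) : Prop :=
  (forall (a : K) x y, f (a *: x + y) = a *: f x + f y) /\
  (forall x y, f (x * y) = f x * f y).

(* L, with the given elements, is the K-algebra generated by them subject to the
   relations above: it satisfies the relations and is universal for them. *)
Definition is_LPA (L : algType K) (v : 'I_(hv H) -> L)
  (lam lams : forall k, 'I_(hI H k) -> 'I_(hJ H k) -> L) : Prop :=
  lpa_relations v lam lams /\
  forall (R : algType K) (v' : 'I_(hv H) -> R)
         (lam' lams' : forall k, 'I_(hI H k) -> 'I_(hJ H k) -> R),
    lpa_relations v' lam' lams' ->
    exists f : L -> R,
      [/\ alg_hom f, (forall u, f (v u) = v' u),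
          (forall k i j, f (lam k i j) = lam' k i j),
          (forall k i j, f (lams k i j) = lams' k i j) &
          (forall g : L -> R, alg_hom g -> (forall u, g (v u) = v' u) ->
             (forall k i j, g (lam k i j) = lam' k i j) ->
             (forall k i j, g (lams k i j) = lams' k i j) ->
             forall x, g x = f x)].

Definition matA (k : 'I_(he H)) (l : 'I_(hv H)) : nat := #|[set i | hs H k i == l]|.
Definition matB (k : 'I_(he H)) (l : 'I_(hv H)) : nat := #|[set j | hr H k j == l]|.

Definition BtAt : 'M[rat]_(hv H, he H) :=
  \matrix_(l, k) ((matB k l)%:R - (matA k l)%:R).

Definition T := {ffun 'I_(hv H) -> nat}.

Definition Mop (k : 'I_(he H)) (x : T) : option T :=
  if [forall l, (matA k l <= x l)%N]
  then Some [ffun l => (x l - matA k l + matB k l)%N] else None.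

Definition Delta (sigma : seq 'I_(he H)) (x : T) : option T :=
  foldl (fun ox k => obind (Mop k) ox) (Some x) sigma.

End LPA.

(* Murray-von Neumann equivalence of idempotent matrices (finitely supported
   matrices are represented by square matrices of arbitrary finite size). *)
Definition mvn_equiv (L : pzRingType) (m p : nat) (e : 'M[L]_m) (f : 'M[L]_p) : Prop :=
  exists (x : 'M[L]_(m, p)) (y : 'M[L]_(p, m)), e = x *m y /\ f = y *m x.

Definition diag_seq (L : pzRingType) (s : seq L) : 'M[L]_(size s) :=
  diag_mx (\row_(i < size s) s`_i).

(* For x in T, [x] = sum_l x_l [v_l] is the class of the block-diagonal matrix
   with x_l copies of v_l (for l = 1..n in order); we record the list of entries. *)
Definition cls_seq (K : fieldType) (H : hypergraph) (L : algType K)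
  (v : 'I_(hv H) -> L) (x : T H) : seq L :=
  flatten [seq nseq (x l) (v l) | l <- enum 'I_(hv H)].

Definition V_eq (K : fieldType) (H : hypergraph) (L : algType K)
  (v : 'I_(hv H) -> L) (x y : T H) : Prop :=
  mvn_equiv (diag_seq (cls_seq v x)) (diag_seq (cls_seq v y)).

Definition confluent (K : fieldType) (H : hypergraph) (L : algType K)
  (v : 'I_(hv H) -> L) : Prop :=
  forall x y : T H, V_eq v x y <->
    exists (sigma sigma' : seq 'I_(he H)) (z : T H),
      Delta sigma x = Some z /\ Delta sigma' y = Some z.

Definition IBN (L : pzRingType) : Prop :=
  forall m p : nat,
    (exists f : 'rV[L]_m -> 'rV[L]_p,
        (forall (a : L) u w, f (a *: u + w) = a *: f u + f w) /\ bijective f) ->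
    m = p.

From HB Require Import structures.
From mathcomp Require Import all_boot all_order all_algebra zify lra.
Set Implicit Arguments. Unset Strict Implicit. Unset Printing Implicit Defensive.
Import Order.TTheory GRing.Theory Num.Theory.
Local Open Scope ring_scope.

(* 1. L is unital with 1 = v_1 + ... + v_n.  The vertex sum e is an idempotent
      acting as a unit on the generators; since homomorphisms out of L are
      determined by the generators, comparing x |-> x%:M with its conjugate by
      the involution [[e, 1-e], [1-e, e]] in M_2(L) shows that e is central,
      and then x |-> e x agrees with the identity, so e = 1.
   2. IBN holds iff the identity matrices 1_m and 1_p are Murray-von Neumann
      equivalent only when m = p; and 1_m represents the class [m(v_1+...+v_n)].
   3. By confluence, [m(v_1+...+v_n)] = [p(v_1+...+v_n)] iff the two constant
      vectors are joined by words of operations M_k; a word acts through the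
      net effect of its letter counts, i.e. through B^t - A^t.  Distinct such
      m, p exist iff the all-ones column c is a rational combination of the
      columns of B^t - A^t, i.e. iff the rank does not grow when c is adjoined. *)

Section AlgHom.
Variable K : fieldType.

Lemma alg_homD (R S : algType K) (f : R -> S) :
  alg_hom f -> forall x y, f (x + y) = f x + f y.
Proof. by case=> lin _ x y; have := lin 1 x y; rewrite !scale1r. Qed.

Lemma alg_hom0 (R S : algType K) (f : R -> S) : alg_hom f -> f 0 = 0.
Proof. by move=> hf; apply: (@addrI _ (f 0)); rewrite -alg_homD // !addr0. Qed.

Lemma alg_hom_sum (R S : algType K) (f : R -> S) (I : finType) (F : I -> R) :
  alg_hom f -> f (\sum_i F i) = \sum_i f (F i).
Proof. by move=> hf; apply: (big_morph f (alg_homD hf) (alg_hom0 hf)). Qed.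

Lemma alg_hom_comp (R S U : algType K) (f : R -> S) (g : S -> U) :
  alg_hom f -> alg_hom g -> alg_hom (g \o f).
Proof. by move=> [fl fm] [gl gm]; split=> [a x y|x y]; rewrite /= ?fl ?gl ?fm ?gm. Qed.

Lemma alg_hom_conj (R : algType K) (u : R) :
  u * u = 1 -> alg_hom (fun x => u * x * u).
Proof.
move=> uu; split=> [a x y|x y]; first by rewrite mulrDr mulrDl -scalerAr -scalerAl.
by rewrite !mulrA -[u * x * u * u]mulrA uu mulr1.
Qed.

Lemma alg_hom_lmul (R : algType K) (e : R) :
  e * e = e -> (forall x, e * x = x * e) -> alg_hom (fun x => e * x).
Proof.
move=> ee ec; split=> [a x y|x y]; first by rewrite mulrDr scalerAr.
by rewrite [RHS]mulrA -[e * x * e]mulrA -(ec x) [e * (e * x)]mulrA ee mulrA.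
Qed.

End AlgHom.

Section Matrix2.
Variables (K : fieldType) (L : algType K).

Definition M2 := 'M[L]_2.
HB.instance Definition _ := GRing.NzRing.on M2.

Definition scale_M2 (a : K) (A : M2) : M2 := map_mx (fun x => a *: x) A.

Lemma scale_M2A a b A : scale_M2 a (scale_M2 b A) = scale_M2 (a * b) A.
Proof. by apply/matrixP=> i j; rewrite !mxE scalerA. Qed.
Lemma scale_M21 : left_id 1 scale_M2.
Proof. by move=> A; apply/matrixP=> i j; rewrite !mxE scale1r. Qed.
Lemma scale_M2Dr : right_distributive scale_M2 +%R.
Proof. by move=> a A B; apply/matrixP=> i j; rewrite !mxE scalerDr. Qed.
Lemma scale_M2Dl A : {morph scale_M2^~ A : a b / a + b}.
Proof. by move=> a b; apply/matrixP=> i j; rewrite !mxE scalerDl. Qed.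
HB.instance Definition _ :=
  GRing.Zmodule_isLmodule.Build K M2 scale_M2A scale_M21 scale_M2Dr scale_M2Dl.

Lemma scale_M2Al (a : K) (A B : M2) : a *: (A * B) = (a *: A) * B.
Proof.
apply/matrixP=> i j; rewrite /GRing.scale /= /scale_M2 !mxE scaler_sumr.
by apply: eq_bigr => k _; rewrite mxE scalerAl.
Qed.
HB.instance Definition _ := GRing.Lmodule_isLalgebra.Build K M2 scale_M2Al.

Lemma scale_M2Ar (a : K) (A B : M2) : a *: (A * B) = A * (a *: B).
Proof.
apply/matrixP=> i j; rewrite /GRing.scale /= /scale_M2 !mxE scaler_sumr.
by apply: eq_bigr => k _; rewrite mxE scalerAr.
Qed.
HB.instance Definition _ := GRing.Lalgebra_isAlgebra.Build K M2 scale_M2Ar.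

Lemma scalar_M2_alg_hom : alg_hom (fun x : L => (x%:M : M2)).
Proof.
split=> [a x y|x y]; last exact: scalar_mxM.
apply/matrixP=> i j; rewrite /GRing.scale /= /scale_M2 !mxE.
by case: eqP => _; rewrite ?mulr1n ?mulr0n ?scaler0 ?addr0.
Qed.

Lemma mulmx_scalar_entry (m n : nat) (A : 'M[L]_(m, n)) b i j :
  (A *m b%:M) i j = A i j * b.
Proof.
rewrite mxE (bigD1 j) //= big1 => [|k /negPf nk]; first by rewrite !mxE eqxx mulr1n addr0.
by rewrite !mxE nk mulr0n mulr0.
Qed.

Lemma sum_ord2 (R : nmodType) (F : 'I_2 -> R) :
  \sum_(k < 2) F k = F ord0 + F ord_max.
Proof. by rewrite big_ord_recr big_ord1; congr (F _ + F _); apply: val_inj. Qed.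

Variable e : L.
Hypothesis ee : e * e = e.

Definition peirce_mx : M2 := \matrix_(i, j) (if i == j then e else 1 - e).

Lemma peirce_mx_invol : peirce_mx * peirce_mx = 1.
Proof.
have e1 : e * (1 - e) = 0 by rewrite mulrBr mulr1 ee subrr.
have e2 : (1 - e) * e = 0 by rewrite mulrBl mul1r ee subrr.
have e3 : (1 - e) * (1 - e) = 1 - e by rewrite mulrBr mulr1 e2 subr0.
apply/matrixP=> i j; rewrite [_ * _]/GRing.mul /= mxE sum_ord2 !mxE.
case: i => [[|[|//]] ?]; case: j => [[|[|//]] ?];
  by rewrite /= ?e1 ?e2 ?e3 ?ee ?addr0 ?subrK // addrC subrK.
Qed.

Lemma peirce_conj_00 (x : L) :
  (peirce_mx * x%:M * peirce_mx) ord0 ord0 = e * x * e + (1 - e) * x * (1 - e).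
Proof.
rewrite [_ * peirce_mx]/GRing.mul /= mxE sum_ord2.
by rewrite -[peirce_mx * _]/(peirce_mx *m _) !mulmx_scalar_entry !mxE.
Qed.

Lemma peirce_conj_fixed (g : L) :
  e * g = g -> g * e = g -> peirce_mx * g%:M * peirce_mx = g%:M.
Proof.
move=> eg ge.
have eg0 : (1 - e) * g = 0 by rewrite mulrBl mul1r eg subrr.
have ge0 : g * (1 - e) = 0 by rewrite mulrBr mulr1 ge subrr.
apply/matrixP=> i j; rewrite [_ * peirce_mx]/GRing.mul /= -[peirce_mx * _]/(peirce_mx *m _).
rewrite mxE sum_ord2 !mulmx_scalar_entry !mxE.
case: i => [[|[|//]] ?]; case: j => [[|[|//]] ?];
  by rewrite /= ?mulr1n ?mulr0n ?mulr0 ?mul0r ?eg ?ge ?eg0 ?ge0 ?mul0r ?addr0 ?add0r.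
Qed.

End Matrix2.

Section UnitFromGenerators.
Variables (K : fieldType) (L : algType K) (gen : L -> Prop).
Hypothesis hom_ext : forall (R : algType K) (g1 g2 : L -> R),
  alg_hom g1 -> alg_hom g2 -> (forall x, gen x -> g1 x = g2 x) ->
  forall x, g1 x = g2 x.
Variable e : L.
Hypotheses (ee : e * e = e) (e_gen : forall x, gen x -> e * x = x /\ x * e = x).

(* Conjugation by [peirce_mx e] fixes the generators, hence every [x%:M]; the
   top-left entry gives the Peirce decomposition x = exe + (1-e)x(1-e). *)
Lemma peirce_decomposition x : x = e * x * e + (1 - e) * x * (1 - e).
Proof.
have conj := alg_hom_comp (scalar_M2_alg_hom L) (alg_hom_conj (peirce_mx_invol ee)).
have fixed g : gen g -> g%:M = peirce_mx e * g%:M * peirce_mx e.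
  by move=> /e_gen [eg ge]; rewrite peirce_conj_fixed.
have := congr1 (fun M : M2 L => M ord0 ord0) (hom_ext (scalar_M2_alg_hom L) conj fixed x).
by rewrite /= peirce_conj_00 mxE eqxx mulr1n.
Qed.

Lemma idem_central x : e * x = x * e.
Proof.
have e1 : e * (1 - e) = 0 by rewrite mulrBr mulr1 ee subrr.
have e2 : (1 - e) * e = 0 by rewrite mulrBl mul1r ee subrr.
have ex : e * x = e * x * e.
  by rewrite {1}[x]peirce_decomposition mulrDr !mulrA ee e1 !mul0r addr0.
have xe : x * e = e * x * e.
  by rewrite {1}[x]peirce_decomposition mulrDl -!mulrA ee e2 !mulr0 addr0 mulrA.
by rewrite ex xe.
Qed.

(* [x |-> e x] is then a homomorphism agreeing with the identity on generators. *)
Lemma idem_generators_one : e = 1.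
Proof.
have id_hom : alg_hom (@id L) by [].
have := hom_ext (alg_hom_lmul ee idem_central) id_hom (fun g hg => (e_gen hg).1) 1.
by rewrite mulr1.
Qed.

End UnitFromGenerators.

Section LeavittPathAlgebra.
Variables (K : fieldType) (H : hypergraph) (L : algType K)
  (v : 'I_(hv H) -> L) (lam lams : forall k, 'I_(hI H k) -> 'I_(hJ H k) -> L).

Definition lpa_gen (x : L) : Prop :=
  [\/ exists u, x = v u, exists k i j, x = @lam k i j | exists k i j, x = @lams k i j].

Lemma lpa_relations_hom (R : algType K) (f : L -> R) :
  alg_hom f -> lpa_relations v lam lams ->
  lpa_relations (f \o v) (fun k i j => f (@lam k i j)) (fun k i j => f (@lams k i j)).
Proof.
move=> hf [r1 r2 r3 r4 r5]; have fM := hf.2.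
split=> [u w|k i j|k i j|k i i'|k j j'] /=.
- by rewrite -fM r1; case: eqP => //; rewrite alg_hom0.
- by case: (r2 k i j) => a b; rewrite -!fM a b.
- by case: (r3 k i j) => a b; rewrite -!fM a b.
- rewrite -(eq_bigr _ (fun j _ => fM _ _)) -alg_hom_sum // r4.
  by case: eqP => //; rewrite alg_hom0.
- rewrite -(eq_bigr _ (fun i _ => fM _ _)) -alg_hom_sum // r5.
  by case: eqP => //; rewrite alg_hom0.
Qed.

Lemma lpa_hom_ext (R : algType K) (g1 g2 : L -> R) :
  is_LPA v lam lams -> alg_hom g1 -> alg_hom g2 ->
  (forall x, lpa_gen x -> g1 x = g2 x) -> forall x, g1 x = g2 x.
Proof.
move=> [rel univ] h1 h2 eq12 x.
have gv u : g1 (v u) = g2 (v u) by apply: eq12; constructor 1; exists u.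
have gl k i j : g1 (@lam k i j) = g2 (@lam k i j).
  by apply: eq12; constructor 2; exists k, i, j.
have gls k i j : g1 (@lams k i j) = g2 (@lams k i j).
  by apply: eq12; constructor 3; exists k, i, j.
have [f [_ _ _ _ uniq_f]] := univ R _ _ _ (lpa_relations_hom h1 rel).
by rewrite (uniq_f g1) // (uniq_f g2) // => *; rewrite /= ?gv ?gl ?gls.
Qed.

Lemma vertex_sum_unit_on_gen (x : L) : lpa_relations v lam lams ->
  lpa_gen x -> (\sum_l v l) * x = x /\ x * (\sum_l v l) = x.
Proof.
move=> [r1 r2 r3 _ _].
have sv u : (\sum_l v l) * v u = v u /\ v u * (\sum_l v l) = v u.
  rewrite mulr_suml mulr_sumr (bigD1 u) //= [X in _ /\ X = _](bigD1 u) //=.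
  rewrite !r1 eqxx !big1 ?addr0 // => w /negPf nw; by rewrite r1 ?nw // eq_sym nw.
have fixes g s r : v s * g = g -> g * v r = g ->
    (\sum_l v l) * g = g /\ g * (\sum_l v l) = g.
  by move=> a b; split; [rewrite -a mulrA (sv s).1 | rewrite -b -mulrA (sv r).2].
case=> [[u ->]|[k [i [j ->]]]|[k [i [j ->]]]] //.
- by case: (r2 k i j); apply: fixes.
- by case: (r3 k i j); apply: fixes.
Qed.

Lemma lpa_one : is_LPA v lam lams -> 1 = \sum_l v l.
Proof.
move=> hL; have [rel _] := hL; symmetry.
apply: (idem_generators_one (gen := lpa_gen)).
- by move=> R g1 g2 h1 h2; apply: lpa_hom_ext.
- case: rel => r1 _ _ _ _; rewrite mulr_suml; apply: eq_bigr => u _.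
  rewrite mulr_sumr (bigD1 u) //= r1 eqxx big1 ?addr0 // => w /negPf nw.
  by rewrite r1 eq_sym nw.
- by move=> x; apply: vertex_sum_unit_on_gen.
Qed.

End LeavittPathAlgebra.

Section MurrayVonNeumann.
Variable L : pzRingType.

Lemma mvn_sym m p (e : 'M[L]_m) (f : 'M[L]_p) : mvn_equiv e f -> mvn_equiv f e.
Proof. by case=> x [y [exy fyx]]; exists y, x. Qed.

Lemma mvn_trans m p q (e : 'M[L]_m) (f : 'M[L]_p) (g : 'M[L]_q) :
  e *m e = e -> g *m g = g -> mvn_equiv e f -> mvn_equiv f g -> mvn_equiv e g.
Proof.
move=> ee gg [x1 [y1 [E1 F1]]] [x2 [y2 [F2 G2]]]; exists (x1 *m x2), (y2 *m y1); split.
  by rewrite mulmxA -(mulmxA x1) -F2 F1 mulmxA -E1 -mulmxA -E1 ee.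
by rewrite mulmxA -(mulmxA y2) -F1 F2 mulmxA -G2 -mulmxA -G2 gg.
Qed.

Lemma mvn_congr m m' p p' (e : 'M[L]_m) (e' : 'M[L]_m') (f : 'M[L]_p) (f' : 'M[L]_p') :
  e *m e = e -> e' *m e' = e' -> f *m f = f -> f' *m f' = f' ->
  mvn_equiv e e' -> mvn_equiv f f' -> mvn_equiv e f <-> mvn_equiv e' f'.
Proof.
move=> ee ee' ff ff' Ee Ef; split=> E.
  exact: mvn_trans ee' ff' (mvn_trans ee' ff (mvn_sym Ee) E) Ef.
exact: mvn_trans ee ff (mvn_trans ee ff' Ee E) (mvn_sym Ef).
Qed.

Lemma linear_rV_mx m p (f : 'rV[L]_m -> 'rV[L]_p) :
  (forall (a : L) u w, f (a *: u + w) = a *: f u + f w) ->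
  forall u, f u = u *m lin1_mx f.
Proof.
move=> lin u.
pose F : {linear 'rV[L]_m -> 'rV[L]_p} := HB.pack f (GRing.isLinear.Build _ _ _ _ f lin).
by rewrite (mul_rV_lin1 F).
Qed.

Lemma IBN_mvn :
  IBN L <-> (forall m p, mvn_equiv (1%:M : 'M[L]_m) (1%:M : 'M[L]_p) -> m = p).
Proof.
split=> ibn m p.
  case=> X [Y [XY YX]]; apply: ibn; exists (fun u => u *m X); split.
    by move=> a u w; rewrite mulmxDl scalemxAl.
  by exists (fun w => w *m Y) => u; rewrite -mulmxA -?XY -?YX mulmx1.
case=> f [lin [g fK gK]]; apply: ibn.
have ling (a : L) u w : g (a *: u + w) = a *: g u + g w.
  by apply: (can_inj fK); rewrite lin !gK.
have hf := linear_rV_mx lin; have hg := linear_rV_mx ling.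
exists (lin1_mx f), (lin1_mx g); split; apply/esym/row_matrixP => i.
  by rewrite row_mul row1 rowE -hf -hg fK.
by rewrite row_mul row1 rowE -hg -hf gK.
Qed.

Lemma mvn_diag_partition m (s : seq L) (pi : 'I_(size s) -> 'I_m) :
  (forall j j', pi j = pi j' -> s`_j * s`_j' = if j == j' then s`_j else 0) ->
  (forall i, \sum_(j | pi j == i) s`_j = 1) ->
  mvn_equiv (1%:M : 'M[L]_m) (diag_seq s).
Proof.
move=> orth part.
pose X : 'M[L]_(m, size s) := \matrix_(i, j) (if pi j == i then s`_j else 0).
pose Y : 'M[L]_(size s, m) := \matrix_(j, i) (if pi j == i then s`_j else 0).
exists X, Y; split; apply/matrixP => a b; rewrite !mxE.
  under eq_bigr => j _ do rewrite !mxE.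
  case: eqVneq => [<-|ne]; last first.
    rewrite big1 // => j _; case: eqP => [->|]; last by rewrite mul0r.
    by rewrite (negPf ne) mulr0.
  rewrite mulr1n -(part a) big_mkcond; apply: eq_bigr => j _.
  by case: eqP => [_|]; rewrite ?mul0r // (orth j j) // eqxx.
rewrite (bigD1 (pi a)) //= big1 => [|i /negPf ne]; last first.
  by rewrite !mxE eq_sym ne mul0r.
rewrite !mxE eqxx addr0; case: (pi b =P pi a) => [pba|npba].
  by rewrite orth ?mulrb.
by case: eqVneq => [ab|_]; [case: npba; rewrite ab | rewrite mulr0].
Qed.

Lemma diag_seq_idem (s : seq L) :
  (forall j : 'I_(size s), s`_j * s`_j = s`_j) -> diag_seq s *m diag_seq s = diag_seq s.
Proof.
move=> idem; rewrite /diag_seq mulmx_diag; congr diag_mx.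
by apply/matrixP => i j; rewrite !mxE idem.
Qed.

End MurrayVonNeumann.

Lemma size_flatten_nseq (T : Type) (t : seq T) m :
  size (flatten [seq nseq m y | y <- t]) = (size t * m)%N.
Proof. by elim: t => //= y t IH; rewrite size_cat size_nseq IH mulSn. Qed.

Lemma nth_flatten_nseq (T : Type) (x0 : T) (t : seq T) m j :
  (j < size t * m)%N -> nth x0 (flatten [seq nseq m y | y <- t]) j = nth x0 t (j %/ m).
Proof.
elim: t j => [|y t IH] j //= jlt; rewrite nth_cat size_nseq.
case: ltnP => [jm|mj]; first by rewrite nth_nseq jm divn_small.
have m0 : (0 < m)%N by nia.
have {2}-> : j = ((j - m) + 1 * m)%N by lia.
by rewrite divnDMl // addn1 /= IH //; nia.
Qed.

Definition const_vec (H : hypergraph) (m : nat) : T H := [ffun _ => m].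

Section ConstantClass.
Variables (K : fieldType) (H : hypergraph) (L : algType K) (v : 'I_(hv H) -> L).
Hypotheses (v_orth : forall u w, v u * v w = if u == w then v u else 0)
  (v_sum : \sum_l v l = 1).
Variable m : nat.

Local Notation s := (cls_seq v (const_vec H m)).

Lemma cls_const_flatten : s = flatten [seq nseq m y | y <- map v (enum 'I_(hv H))].
Proof.
rewrite /cls_seq -map_comp; congr flatten; apply: eq_map => l.
by rewrite /= ffunE.
Qed.

Lemma size_cls_const : size s = (hv H * m)%N.
Proof. by rewrite cls_const_flatten size_flatten_nseq size_map size_enum_ord. Qed.

Lemma cls_const_m_gt0 (j : 'I_(size s)) : (0 < m)%N.
Proof. by have := ltn_ord j; rewrite [X in (_ < X)%N]size_cls_const; nia. Qed.

Lemma cls_const_div (j : 'I_(size s)) : (j %/ m < hv H)%N.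
Proof.
by rewrite ltn_divLR ?(cls_const_m_gt0 j) // -[X in (_ < X)%N]size_cls_const.
Qed.

(* Position j = l * m + r of s holds the vertex l, in its r-th copy. *)
Definition vertex_index (j : 'I_(size s)) : 'I_(hv H) := Ordinal (cls_const_div j).
Definition copy_index (j : 'I_(size s)) : 'I_m := Ordinal (ltn_pmod j (cls_const_m_gt0 j)).

Lemma nth_cls_const (j : 'I_(size s)) : s`_j = v (vertex_index j).
Proof.
have := @nth_flatten_nseq L 0 (map v (enum 'I_(hv H))) m j.
rewrite -cls_const_flatten size_map size_enum_ord => ->; last first.
  by rewrite -[X in (_ < X)%N]size_cls_const.
rewrite (nth_map (vertex_index j)) ?size_enum_ord ?cls_const_div //.
by congr v; apply: val_inj; rewrite /= nth_enum_ord ?cls_const_div.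
Qed.

Lemma cls_const_index_inj (j j' : 'I_(size s)) :
  vertex_index j = vertex_index j' -> copy_index j = copy_index j' -> j = j'.
Proof.
move=> /(congr1 val) /= q /(congr1 val) /= r; apply: val_inj => /=.
by rewrite (divn_eq j m) (divn_eq j' m) q r.
Qed.

Lemma cls_const_orth (j j' : 'I_(size s)) :
  copy_index j = copy_index j' -> s`_j * s`_j' = if j == j' then s`_j else 0.
Proof.
move=> r; rewrite !nth_cls_const v_orth.
case: eqVneq => [q|nq]; first by rewrite (cls_const_index_inj q r) eqxx.
by case: eqVneq => // jj'; case/eqP: nq; rewrite jj'.
Qed.

(* Each copy i runs once through all the vertices. *)
Lemma cls_const_copy_sum (i : 'I_m) : \sum_(j | copy_index j == i) s`_j = 1.
Proof.
have pos (l : 'I_(hv H)) : (l * m + i < size s)%N.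
  by rewrite size_cls_const; have := ltn_ord i; have := ltn_ord l; nia.
have m0 : (0 < m)%N by apply: leq_ltn_trans (ltn_ord i).
have copy_pos l : copy_index (Ordinal (pos l)) = i.
  by apply: val_inj; rewrite /= modnMDl modn_small.
have vertex_pos l : vertex_index (Ordinal (pos l)) = l.
  by apply: val_inj; rewrite /= divnMDl // divn_small ?addn0.
rewrite -v_sum (reindex_onto (fun l => Ordinal (pos l)) vertex_index) /=.
  apply: eq_big => [l|l _]; first by rewrite copy_pos vertex_pos !eqxx.
  by rewrite -[(l * m + i)%N]/(val (Ordinal (pos l))) nth_cls_const vertex_pos.
move=> j /eqP ci; apply: val_inj; rewrite /= -ci /=.
by rewrite [RHS](divn_eq j m).
Qed.

Lemma cls_const_mvn : mvn_equiv (1%:M : 'M[L]_m) (diag_seq s).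
Proof. exact: mvn_diag_partition cls_const_orth cls_const_copy_sum. Qed.

Lemma cls_const_idem : diag_seq s *m diag_seq s = diag_seq s.
Proof. by apply: diag_seq_idem => j; rewrite cls_const_orth ?eqxx. Qed.

End ConstantClass.

Lemma common_denominator (I : finType) (w : I -> rat) :
  exists2 d : nat, (0 < d)%N & exists u : I -> int, forall k, (u k)%:~R = w k * d%:R.
Proof.
pose P : int := \prod_k denq (w k).
have P_gt0 : 0 < P by apply: prodr_gt0 => k _; exact: denq_gt0.
exists `|P|%N; first by rewrite absz_gt0 gt_eqF.
exists (fun k => numq (w k) * \prod_(k' | k' != k) denq (w k')) => k.
rewrite -[_%:R]/((Posz `|P|)%:~R) gez0_abs ?ltW //.
by rewrite intrM numqE -mulrA -intrM /P [in RHS](bigD1 k).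
Qed.

Lemma sum_word_count (R : nmodType) (I : finType) (s : seq I) (F : I -> R) :
  \sum_(k <- s) F k = \sum_k F k *+ count_mem k s.
Proof.
elim: s => [|k0 s IH]; first by rewrite big_nil big1 // => k _; rewrite mulr0n.
rewrite big_cons IH /=; under [RHS]eq_bigr => k _ do rewrite mulrnDr.
rewrite big_split /=; congr (_ + _).
rewrite (bigD1 k0) //= eqxx mulr1n big1 ?addr0 // => k nk.
by rewrite eq_sym (negPf nk) mulr0n.
Qed.

Definition word_of_counts (I : finType) (c : I -> nat) : seq I :=
  flatten [seq nseq (c k) k | k <- enum I].

Lemma count_word_of_counts (I : finType) (c : I -> nat) k :
  count_mem k (word_of_counts c) = c k.
Proof.
rewrite /word_of_counts count_flatten -map_comp sumnE big_map big_enum /=.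
rewrite (bigD1 k) //= count_nseq /= eqxx mul1n big1 ?addn0 // => k' nk'.
by rewrite count_nseq /= (negPf nk') mul0n.
Qed.

Section Combinatorics.
Variable H : hypergraph.
Local Notation A := (@matA H).
Local Notation B := (@matB H).

(* Net effect on vertex l of applying each M_k exactly u k times. *)
Definition net_effect (u : 'I_(he H) -> int) (l : 'I_(hv H)) : int :=
  \sum_k u k * ((B k l)%:Z - (A k l)%:Z).

Lemma Delta_None (s : seq 'I_(he H)) :
  foldl (fun ox k => obind (Mop k) ox) None s = None.
Proof. by elim: s. Qed.

Lemma Delta_cons k s (x : T H) :
  Delta (k :: s) x = if [forall l, (A k l <= x l)%N]
    then Delta s [ffun l => (x l - A k l + B k l)%N] else None.
Proof. by rewrite /Delta /= /Mop; case: ifP => // _; rewrite Delta_None. Qed.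

Lemma Delta_net (s : seq 'I_(he H)) (x z : T H) : Delta s x = Some z ->
  forall l, (z l)%:Z = (x l)%:Z + net_effect (fun k => (count_mem k s)%:Z) l.
Proof.
rewrite /net_effect; elim: s x => [|k s IH] x.
  by case=> -> l; rewrite big1 ?addr0 // => k _; rewrite mul0r.
rewrite Delta_cons; case: ifP => // /forallP Ak /IH net l.
rewrite net ffunE /=; under [in RHS]eq_bigr => k' _ do rewrite PoszD mulrDl.
have single : \sum_i (k == i)%:Z * ((B i l)%:Z - (A i l)%:Z) = (B k l)%:Z - (A k l)%:Z.
  rewrite (bigD1 k) //= eqxx mul1r big1 ?addr0 // => i ni.
  by rewrite eq_sym (negPf ni) mul0r.
rewrite big_split /= single addrA; congr (_ + _); have := Ak l; lia.
Qed.

Lemma Delta_defined (s : seq 'I_(he H)) (x : T H) :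
  (forall l, \sum_(k <- s) A k l <= x l)%N -> exists z, Delta s x = Some z.
Proof.
elim: s x => [|k s IH] x hs; first by exists x.
have Ak : [forall l, (A k l <= x l)%N].
  by apply/forallP => l; have := hs l; rewrite big_cons; lia.
rewrite Delta_cons Ak; apply: IH => l; rewrite ffunE.
by have := hs l; rewrite big_cons; lia.
Qed.

(* The constant vectors m(v_1+...+v_n) and p(v_1+...+v_n) have a common
   descendant, i.e. (by confluence) the same class in V(L). *)
Definition reach (m p : nat) : Prop := exists (s s' : seq 'I_(he H)) (z : T H),
  Delta s (const_vec H m) = Some z /\ Delta s' (const_vec H p) = Some z.

Lemma reach_net m p : reach m p -> exists c c' : 'I_(he H) -> nat,
  forall l, m%:Z + net_effect (fun k => (c k)%:Z) l = p%:Z + net_effect (fun k => (c' k)%:Z) l.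
Proof.
case=> s [s' [z [hs hs']]]; exists (fun k => count_mem k s), (fun k => count_mem k s') => l.
by have := Delta_net hs l; have := Delta_net hs' l; rewrite !ffunE => <- <-.
Qed.

(* Conversely, if the net effects of c and c' differ by the constant d, then
   starting high enough, c and c' lead M and M + d to the same vector. *)
Lemma net_reach (c c' : 'I_(he H) -> nat) (d : nat) :
  (forall l, net_effect (fun k => (c k)%:Z) l = d%:Z + net_effect (fun k => (c' k)%:Z) l) ->
  exists M, reach M (M + d).
Proof.
move=> eq_net.
pose M := (\sum_l (\sum_k A k l * c k + \sum_k A k l * c' k))%N.
have need_le l : (\sum_k A k l * c k + \sum_k A k l * c' k <= M)%N.
  by rewrite /M (bigD1 l) //= leq_addr.
have cost (e : 'I_(he H) -> nat) l :
    (\sum_(k <- word_of_counts e) A k l = \sum_k A k l * e k)%N.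
  rewrite sum_word_count; apply: eq_bigr => k _.
  by rewrite count_word_of_counts -mulr_natr natn.
have [z hz] : exists z, Delta (word_of_counts c) (const_vec H M) = Some z.
  by apply: Delta_defined => l; rewrite cost ffunE; have := need_le l; lia.
have [z' hz'] : exists z, Delta (word_of_counts c') (const_vec H (M + d)) = Some z.
  by apply: Delta_defined => l; rewrite cost ffunE; have := need_le l; lia.
exists M, (word_of_counts c), (word_of_counts c'), z; split => //.
have net_word e l : net_effect (fun k => (count_mem k (word_of_counts e))%:Z) l =
                    net_effect (fun k => (e k)%:Z) l.
  by apply: eq_bigr => k _; rewrite count_word_of_counts.
rewrite hz'; congr Some; apply/ffunP => l; apply/eqP; rewrite -eqz_nat; apply/eqP.
by rewrite (Delta_net hz) (Delta_net hz') !net_word !ffunE eq_net PoszD addrA.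
Qed.

Lemma net_effect_sub (u u' : 'I_(he H) -> int) l :
  net_effect (fun k => u k - u' k) l = net_effect u l - net_effect u' l.
Proof. by rewrite /net_effect -sumrB; apply: eq_bigr => k _; rewrite mulrBl. Qed.

Local Notation D := (BtAt H).
Local Notation c := (const_mx 1 : 'cV[rat]_(hv H)).

Lemma net_effect_rat (u : 'I_(he H) -> int) l :
  (net_effect u l)%:~R = \sum_k (u k)%:~R * D l k :> rat.
Proof. by rewrite rmorph_sum; apply: eq_bigr => k _; rewrite mxE rmorphM rmorphB. Qed.

Lemma rank_augmented : (\rank D < \rank (row_mx D c))%N = ~~ (c^T <= D^T)%MS.
Proof.
rewrite -[\rank (row_mx _ _)]mxrank_tr tr_row_mx -[\rank D]mxrank_tr -addsmxE.
have [le_rank eq_rank] := mxrank_leqif_sup (addsmxSl D^T c^T).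
by rewrite ltn_neqAle eq_rank le_rank andbT addsmx_sub submx_refl.
Qed.

Lemma col_spaceP :
  reflect (exists w : 'I_(he H) -> rat, forall l, \sum_k w k * D l k = 1) (c^T <= D^T)%MS.
Proof.
apply: (iffP submxP) => [[x cx]|[w hw]].
  exists (fun k => x 0 k) => l.
  have := congr1 (fun M : 'rV_(hv H) => M 0 l) cx; rewrite !mxE => ->.
  by apply: eq_bigr => k _; rewrite !mxE.
exists (\row_k w k); apply/matrixP => i l; rewrite !mxE -(hw l).
by apply: eq_bigr => k _; rewrite !mxE.
Qed.

Lemma reach_col_space m p : reach m p -> m <> p -> (c^T <= D^T)%MS.
Proof.
case/reach_net => n [n' eq_net] mp; apply/col_spaceP.
have mp0 : (m%:R - p%:R : rat) != 0 by rewrite subr_eq0 eqr_nat; apply/eqP.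
have eq_rat l : \sum_k ((n' k)%:R - (n k)%:R) * D l k = m%:R - p%:R :> rat.
  have := congr1 (fun z : int => z%:~R : rat) (eq_net l).
  rewrite /= !rmorphD /= !net_effect_rat; under eq_bigr => k _ do rewrite mulrBl.
  rewrite sumrB; move: (\sum_k _) (\sum_k _) => X Y.
  by rewrite -!pmulrn; lra.
exists (fun k => ((n' k)%:R - (n k)%:R) / (m%:R - p%:R)) => l.
under eq_bigr => k _ do rewrite mulrAC.
by rewrite -mulr_suml eq_rat divff.
Qed.

Definition int_pos (z : int) : nat := if z is Posz n then n else 0.
Definition int_neg (z : int) : nat := if z is Negz n then n.+1 else 0.

Lemma int_pos_neg (z : int) : z = (int_pos z)%:Z - (int_neg z)%:Z.
Proof. by case: z => n /=; rewrite ?subr0 ?NegzE ?sub0r. Qed.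

(* If c lies in the column space, clearing denominators gives integer counts
   whose net effect is a positive constant, hence distinct reachable constants. *)
Lemma col_space_reach : (c^T <= D^T)%MS -> exists m p, m <> p /\ reach m p.
Proof.
case/col_spaceP => w hw; have [d d_gt0 [u hu]] := common_denominator w.
have eq_int l : net_effect u l = d%:Z.
  apply: (@intr_inj rat); rewrite net_effect_rat.
  under eq_bigr => k _ do rewrite hu mulrAC.
  by rewrite -mulr_suml hw mul1r.
pose up k := int_pos (u k); pose um k := int_neg (u k).
have net_u l : net_effect u l =
    net_effect (fun k => (up k)%:Z) l - net_effect (fun k => (um k)%:Z) l.
  by rewrite -net_effect_sub; apply: eq_bigr => k _; rewrite -int_pos_neg.
have [M reachM] : exists M, reach M (M + d).
  by apply: (@net_reach up um) => l; rewrite -(eq_int l) net_u subrK.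
by exists M, (M + d)%N; split => //; lia.
Qed.

Lemma reach_rank :
  (forall m p, reach m p -> m = p) <-> (\rank D < \rank (row_mx D c))%N.
Proof.
rewrite rank_augmented; split=> [reach_eq|/negP no_c m p r].
  by apply/negP => /col_space_reach [m [p [mp /reach_eq]]].
by case: (eqVneq m p) => // /eqP mp; case: no_c; exact: reach_col_space r mp.
Qed.

End Combinatorics.

Theorem mainTheorem18 (K : fieldType) (H : hypergraph) (L : algType K)
  (v : 'I_(hv H) -> L) (lam lams : forall k, 'I_(hI H k) -> 'I_(hJ H k) -> L) :
  is_LPA v lam lams ->
  confluent v ->
  (IBN L <-> (\rank (BtAt H) < \rank (row_mx (BtAt H) (const_mx (1%R : rat) : 'cV[rat]_(hv H))))%N).
Proof.
move=> hL confl; have [[v_orth _ _ _ _] _] := hL.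
have v_sum := esym (lpa_one hL).
have one_reach m p : mvn_equiv (1%:M : 'M[L]_m) (1%:M : 'M[L]_p) <-> reach H m p.
  rewrite /reach -confl /V_eq.
  apply: mvn_congr; rewrite ?mulmx1 ?cls_const_idem //; exact: cls_const_mvn.
rewrite -reach_rank IBN_mvn.
by split=> eq_mp m p /one_reach; apply: eq_mp.
Qed.
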